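(* Let $\mathcal R$ be a commutative ring with identity, $\mathcal M,\mathcal N$ modules over $\mathcal R$, $\Omega\subseteq\mathcal M_{\mathrm{nc}}$ a right admissible nc set, $f:\Omega\to\mathcal N_{\mathrm{nc}}$ a nc function, $n\in\mathbb N$ and $Y\in\Omega_n$. Then for each $N\in\mathbb N$ and every $X\in\Omega_n$, $$f(X)=\sum_{\ell=0}^N\Delta_R^\ell f(\underbrace{Y,\dots,Y}_{\ell+1})(\underbrace{X-Y,\dots,X-Y}_{\ell})+\Delta_R^{N+1}f(\underbrace{Y,\dots,Y}_{N+1},X)(\underbrace{X-Y,\dots,X-Y}_{N+1}).$$
   Context: $\mathcal M_{\mathrm{nc}}=\coprod_{n\ge1}\mathcal M^{n\times n}$; matrices over $\mathcal R$ act on matrices over $\mathcal M,\mathcal N$ by matrix multiplication; $X\oplus Y=\begin{bmatrix}X&0\\0&Y\end{bmatrix}$. A nc set is a subset $\Omega\subseteq\mathcal M_{\mathrm{nc}}$ closed under direct sums, $\Omega_n=\Omega\cap\mathcal M^{n\times n}$. A nc function $f:\Omega\to\mathcal N_{\mathrm{nc}}$ satisfies $f(\Omega_n)\subseteq\mathcal N^{n\times n}$, $f(X\oplus Y)=f(X)\oplus f(Y)$, and $f(SXS^{-1})=Sf(X)S^{-1}$ whenever $S\in\mathcal R^{n\times n}$ is invertible and $X,SXS^{-1}\in\Omega_n$. $\Omega$ is right admissible if for all $X\in\Omega_n$, $Y\in\Omega_m$, $Z\in\mathcal M^{n\times m}$ there is an invertible $r\in\mathcal R$ with $\begin{bmatrix}X&rZ\\0&Y\end{bmatrix}\in\Omega_{n+m}$.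 Higher order difference-differential operators: let $\tilde\Omega=\{SXS^{-1}: X\in\Omega_n,\ S\in\mathcal R^{n\times n}\text{ invertible},\ n\in\mathbb N\}$; $f$ extends uniquely to a nc function $\tilde f$ on $\tilde\Omega$ by $\tilde f(SXS^{-1})=Sf(X)S^{-1}$. If $\Omega$ is right admissible, then for $X^j\in\Omega_{n_j}$ ($j=0,\dots,\ell$) and $Z^j\in\mathcal M^{n_{j-1}\times n_j}$ ($j=1,\dots,\ell$), the block upper bidiagonal matrix $B$ with diagonal blocks $X^0,\dots,X^\ell$, blocks $Z^1,\dots,Z^\ell$ directly above the diagonal and zeros elsewhere lies in $\tilde\Omega$, and $\Delta_R^\ell f(X^0,\dots,X^\ell)(Z^1,\dots,Z^\ell)\in\mathcal N^{n_0\times n_\ell}$ denotes the $(1,\ell+1)$ block entry of $\tilde f(B)$; it is $\mathcal R$-multilinear in $(Z^1,\dots,Z^\ell)$, and $\Delta_R^0f=f$. *)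

From HB Require Import structures.
From mathcomp Require Import all_boot all_order all_algebra.
From Stdlib Require Import ClassicalEpsilon.
Set Implicit Arguments. Unset Strict Implicit. Unset Printing Implicit Defensive.
Import GRing.Theory.
Local Open Scope ring_scope.

Section NC.
Variables (R : comPzRingType) (M N : lmodType R).

Definition mxlact (V : lmodType R) p q r (S : 'M[R]_(p, q)) (X : 'M[V]_(q, r))
  : 'M[V]_(p, r) := \matrix_(i, j) \sum_k S i k *: X k j.
(* Right action: (X T)_{ij} = sum_k X_{ik} T_{kj}  (R is commutative) *)
Definition mxract (V : lmodType R) p q r (X : 'M[V]_(p, q)) (T : 'M[R]_(q, r))
  : 'M[V]_(p, r) := \matrix_(i, j) \sum_k T k j *: X i k.

Definition mxinverse n (S T : 'M[R]_n) := S *m T = 1%:M /\ T *m S = 1%:M.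

(* A subset of M_nc: Omega n is Omega_n; only sizes n >= 1 matter. *)
Definition ncsubset := forall n : nat, 'M[M]_n -> Prop.

Definition nc_set (Om : ncsubset) :=
  forall n m (X : 'M[M]_n) (Y : 'M[M]_m), (0 < n)%N -> (0 < m)%N ->
    Om n X -> Om m Y -> Om (n + m)%N (block_mx X 0 0 Y).

Definition right_admissible (Om : ncsubset) :=
  forall n m (X : 'M[M]_n) (Y : 'M[M]_m) (Z : 'M[M]_(n, m)),
    (0 < n)%N -> (0 < m)%N -> Om n X -> Om m Y ->
    exists r r' : R, r * r' = 1 /\ Om (n + m)%N (block_mx X (map_mx (fun z => r *: z) Z) 0 Y).

(* f is given on all square matrices; only its values on Omega matter. *)
Definition ncfun := forall n : nat, 'M[M]_n -> 'M[N]_n.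

Definition nc_function (Om : ncsubset) (f : ncfun) :=
  (forall n m (X : 'M[M]_n) (Y : 'M[M]_m), (0 < n)%N -> (0 < m)%N ->
     Om n X -> Om m Y ->
     f (n + m)%N (block_mx X 0 0 Y) = block_mx (f n X) 0 0 (f m Y)) /\
  (forall n (X : 'M[M]_n) (S T : 'M[R]_n), (0 < n)%N -> mxinverse S T ->
     Om n X -> Om n (mxlact S (mxract X T)) ->
     f n (mxlact S (mxract X T)) = mxlact S (mxract (f n X) T)).

Definition ext_value (Om : ncsubset) (f : ncfun) k (B : 'M[M]_k) (V : 'M[N]_k) :=
  exists (X : 'M[M]_k) (S T : 'M[R]_k), (0 < k)%N /\ mxinverse S T /\ Om k X /\
    B = mxlact S (mxract X T) /\ V = mxlact S (mxract (f k X) T).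

(* the extension f~ of f to Omega~ (well defined on Omega~; arbitrary elsewhere) *)
Definition ftilde (Om : ncsubset) (f : ncfun) k (B : 'M[M]_k) : 'M[N]_k :=
  epsilon (inhabits 0) (ext_value Om f B).

(* Block upper bidiagonal matrix with l+1 diagonal blocks Xs 0, ..., Xs l (all
   n x n) and Zs 0, ..., Zs (l-1) (= Z^1, ..., Z^l) directly above the diagonal. *)
Definition bidiag n l (Xs Zs : nat -> 'M[M]_n)
  : 'M[M]_(\sum_(i < l.+1) n) :=
  mxblock (p_ := fun _ : 'I_l.+1 => n) (q_ := fun _ : 'I_l.+1 => n)
    (fun i j => if (i : nat) == j then Xs i
                else if (j : nat) == i.+1 then Zs i else 0).

(* Delta_R^l f (Xs 0, ..., Xs l)(Zs 0, ..., Zs (l-1)) : the (1, l+1) block of f~(B) *)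
Definition DeltaR (Om : ncsubset) (f : ncfun) n l (Xs Zs : nat -> 'M[M]_n)
  : 'M[N]_n :=
  submxblock (p_ := fun _ : 'I_l.+1 => n) (q_ := fun _ : 'I_l.+1 => n)
    (ftilde Om f (bidiag l Xs Zs)) ord0 ord_max.

End NC.

(* Nc functions preserve intertwinings: P A = A Q implies f(P) A = A f(Q).
   Let C be the block upper bidiagonal matrix with diagonal blocks
   Y, ..., Y, X (N+2 of them) and X - Y above the diagonal.  Every block row of
   C sums to X, so C E = E X for the column E of identity blocks, whence f(X) is
   the sum of the first block row of f~(C).  The leading principal block
   submatrices of C are intertwined with C by the coordinate embeddings, so the
   (1, l+1) block of f~(C) is Delta^l f(Y, ..., Y)(X - Y, ...) for l <= N; the
   last block is Delta^{N+1} f(Y, ..., Y, X)(X - Y, ...) by definition. *)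

From HB Require Import structures.
From mathcomp Require Import all_boot all_order all_algebra.
From Stdlib Require Import ClassicalEpsilon.
Set Implicit Arguments. Unset Strict Implicit. Unset Printing Implicit Defensive.
Import GRing.Theory.
Local Open Scope ring_scope.

Section MatrixActions.
Variables (R : comPzRingType) (V : lmodType R).

Definition mxscale (a : R) p q (X : 'M[V]_(p, q)) := map_mx ( *:%R a) X.

Lemma mxlactA p q r s (S : 'M[R]_(p, q)) (S' : 'M[R]_(q, r)) (X : 'M[V]_(r, s)) :
  mxlact S (mxlact S' X) = mxlact (S *m S') X.
Proof.
apply/matrixP => i j; rewrite !mxE.
under eq_bigr do rewrite mxE scaler_sumr.
under [RHS]eq_bigr do rewrite mxE scaler_suml.
rewrite exchange_big /=; apply: eq_bigr => l _; apply: eq_bigr => k _.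
by rewrite scalerA.
Qed.

Lemma mxractA p q r s (X : 'M[V]_(p, q)) (T : 'M[R]_(q, r)) (T' : 'M[R]_(r, s)) :
  mxract (mxract X T) T' = mxract X (T *m T').
Proof.
apply/matrixP => i j; rewrite !mxE.
under eq_bigr do rewrite mxE scaler_sumr.
under [RHS]eq_bigr do rewrite mxE scaler_suml.
rewrite exchange_big /=; apply: eq_bigr => l _; apply: eq_bigr => k _.
by rewrite scalerA mulrC.
Qed.

Lemma mxlact_ract p q r s (S : 'M[R]_(p, q)) (X : 'M[V]_(q, r)) (T : 'M[R]_(r, s)) :
  mxlact S (mxract X T) = mxract (mxlact S X) T.
Proof.
apply/matrixP => i j; rewrite !mxE.
under eq_bigr do rewrite mxE scaler_sumr.
under [RHS]eq_bigr do rewrite mxE scaler_sumr.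
rewrite exchange_big /=; apply: eq_bigr => l _; apply: eq_bigr => k _.
by rewrite !scalerA mulrC.
Qed.

Lemma mxlact1 p q (X : 'M[V]_(p, q)) : mxlact 1%:M X = X.
Proof.
apply/matrixP => i j; rewrite !mxE (bigD1 i) //= big1 => [|k /negbTE nki].
  by rewrite mxE eqxx scale1r addr0.
by rewrite mxE eq_sym nki scale0r.
Qed.

Lemma mxract1 p q (X : 'M[V]_(p, q)) : mxract X 1%:M = X.
Proof.
apply/matrixP => i j; rewrite !mxE (bigD1 j) //= big1 => [|k /negbTE nkj].
  by rewrite mxE eqxx scale1r addr0.
by rewrite mxE nkj scale0r.
Qed.

Lemma mxlact0l p q r (X : 'M[V]_(q, r)) : mxlact (0 : 'M[R]_(p, q)) X = 0.
Proof. by apply/matrixP => i j; rewrite !mxE big1 // => k _; rewrite mxE scale0r. Qed.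

Lemma mxlact0r p q r (S : 'M[R]_(p, q)) : mxlact S (0 : 'M[V]_(q, r)) = 0.
Proof. by apply/matrixP => i j; rewrite !mxE big1 // => k _; rewrite mxE scaler0. Qed.

Lemma mxract0l p q r (T : 'M[R]_(q, r)) : mxract (0 : 'M[V]_(p, q)) T = 0.
Proof. by apply/matrixP => i j; rewrite !mxE big1 // => k _; rewrite mxE scaler0. Qed.

Lemma mxract0r p q r (X : 'M[V]_(p, q)) : mxract X (0 : 'M[R]_(q, r)) = 0.
Proof. by apply/matrixP => i j; rewrite !mxE big1 // => k _; rewrite mxE scale0r. Qed.

Lemma mxractNr p q r (X : 'M[V]_(p, q)) (T : 'M[R]_(q, r)) :
  mxract X (- T) = - mxract X T.
Proof.
apply/matrixP => i j; rewrite !mxE -sumrN; apply: eq_bigr => k _.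
by rewrite mxE scaleNr.
Qed.

Lemma mxlact_if p q (X : 'M[V]_(p, q)) (b : bool) :
  mxlact (if b then 1%:M else 0) X = if b then X else 0.
Proof. by case: b; rewrite ?mxlact1 ?mxlact0l. Qed.

Lemma mxract_if p q (X : 'M[V]_(p, q)) (b : bool) :
  mxract X (if b then 1%:M else 0) = if b then X else 0.
Proof. by case: b; rewrite ?mxract1 ?mxract0r. Qed.

Lemma mxscaleA a b p q (X : 'M[V]_(p, q)) :
  mxscale a (mxscale b X) = mxscale (a * b) X.
Proof. by apply/matrixP => i j; rewrite !mxE scalerA. Qed.

Lemma mxscale1 p q (X : 'M[V]_(p, q)) : mxscale 1 X = X.
Proof. by apply/matrixP => i j; rewrite !mxE scale1r. Qed.

Lemma mxlactZl p q r a (S : 'M[R]_(p, q)) (X : 'M[V]_(q, r)) :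
  mxlact (a *: S) X = mxscale a (mxlact S X).
Proof.
apply/matrixP => i j; rewrite !mxE scaler_sumr; apply: eq_bigr => k _.
by rewrite mxE scalerA.
Qed.

Lemma mxlactZr p q r a (S : 'M[R]_(p, q)) (X : 'M[V]_(q, r)) :
  mxlact S (mxscale a X) = mxscale a (mxlact S X).
Proof.
apply/matrixP => i j; rewrite !mxE scaler_sumr; apply: eq_bigr => k _.
by rewrite mxE !scalerA mulrC.
Qed.

Lemma mxractZl p q r a (X : 'M[V]_(p, q)) (T : 'M[R]_(q, r)) :
  mxract (mxscale a X) T = mxscale a (mxract X T).
Proof.
apply/matrixP => i j; rewrite !mxE scaler_sumr; apply: eq_bigr => k _.
by rewrite mxE !scalerA mulrC.
Qed.

Lemma mxractZr p q r a (X : 'M[V]_(p, q)) (T : 'M[R]_(q, r)) :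
  mxract X (a *: T) = mxscale a (mxract X T).
Proof.
apply/matrixP => i j; rewrite !mxE scaler_sumr; apply: eq_bigr => k _.
by rewrite mxE scalerA.
Qed.

Lemma mxlact_row p q r1 r2 (S : 'M[R]_(p, q)) (X1 : 'M[V]_(q, r1))
    (X2 : 'M[V]_(q, r2)) :
  mxlact S (row_mx X1 X2) = row_mx (mxlact S X1) (mxlact S X2).
Proof.
apply/matrixP => i k; rewrite !mxE.
by case defk: (split k) => /[!mxE]; under eq_bigr do rewrite mxE defk.
Qed.

Lemma mxlact_col p1 p2 q r (S1 : 'M[R]_(p1, q)) (S2 : 'M[R]_(p2, q))
    (X : 'M[V]_(q, r)) :
  mxlact (col_mx S1 S2) X = col_mx (mxlact S1 X) (mxlact S2 X).
Proof.
apply/matrixP => i k; rewrite !mxE.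
by case defi: (split i) => /[!mxE]; under eq_bigr do rewrite mxE defi.
Qed.

Lemma mxlact_row_col p q1 q2 r (S1 : 'M[R]_(p, q1)) (S2 : 'M[R]_(p, q2))
    (X1 : 'M[V]_(q1, r)) (X2 : 'M[V]_(q2, r)) :
  mxlact (row_mx S1 S2) (col_mx X1 X2) = mxlact S1 X1 + mxlact S2 X2.
Proof.
apply/matrixP => i k; rewrite !mxE big_split_ord /=.
by congr (_ + _); apply: eq_bigr => j _; rewrite (row_mxEl, row_mxEr) ?col_mxEu ?col_mxEd.
Qed.

Lemma mxract_row p q r1 r2 (X : 'M[V]_(p, q)) (T1 : 'M[R]_(q, r1))
    (T2 : 'M[R]_(q, r2)) :
  mxract X (row_mx T1 T2) = row_mx (mxract X T1) (mxract X T2).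
Proof.
apply/matrixP => i k; rewrite !mxE.
by case defk: (split k) => /[!mxE]; under eq_bigr do rewrite mxE defk.
Qed.

Lemma mxract_col p1 p2 q r (X1 : 'M[V]_(p1, q)) (X2 : 'M[V]_(p2, q))
    (T : 'M[R]_(q, r)) :
  mxract (col_mx X1 X2) T = col_mx (mxract X1 T) (mxract X2 T).
Proof.
apply/matrixP => i k; rewrite !mxE.
by case defi: (split i) => /[!mxE]; under eq_bigr do rewrite mxE defi.
Qed.

Lemma mxract_row_col p q1 q2 r (X1 : 'M[V]_(p, q1)) (X2 : 'M[V]_(p, q2))
    (T1 : 'M[R]_(q1, r)) (T2 : 'M[R]_(q2, r)) :
  mxract (row_mx X1 X2) (col_mx T1 T2) = mxract X1 T1 + mxract X2 T2.
Proof.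
apply/matrixP => i k; rewrite !mxE big_split_ord /=.
by congr (_ + _); apply: eq_bigr => j _; rewrite (row_mxEl, row_mxEr) ?col_mxEu ?col_mxEd.
Qed.

Lemma mxlact_block m1 m2 n1 n2 p1 p2 (a : 'M[R]_(m1, n1)) (b : 'M[R]_(m1, n2))
    (c : 'M[R]_(m2, n1)) (d : 'M[R]_(m2, n2)) (x : 'M[V]_(n1, p1))
    (y : 'M[V]_(n1, p2)) (z : 'M[V]_(n2, p1)) (w : 'M[V]_(n2, p2)) :
  mxlact (block_mx a b c d) (block_mx x y z w) =
  block_mx (mxlact a x + mxlact b z) (mxlact a y + mxlact b w)
           (mxlact c x + mxlact d z) (mxlact c y + mxlact d w).
Proof.
by rewrite block_mxEv mxlact_col block_mxEh !mxlact_row !mxlact_row_col -block_mxEv.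
Qed.

Lemma mxract_block m1 m2 n1 n2 p1 p2 (x : 'M[V]_(m1, n1)) (y : 'M[V]_(m1, n2))
    (z : 'M[V]_(m2, n1)) (w : 'M[V]_(m2, n2)) (a : 'M[R]_(n1, p1))
    (b : 'M[R]_(n1, p2)) (c : 'M[R]_(n2, p1)) (d : 'M[R]_(n2, p2)) :
  mxract (block_mx x y z w) (block_mx a b c d) =
  block_mx (mxract x a + mxract y c) (mxract x b + mxract y d)
           (mxract z a + mxract w c) (mxract z b + mxract w d).
Proof.
by rewrite block_mxEv mxract_col block_mxEh !mxract_row !mxract_row_col -block_mxEv.
Qed.

Lemma mxlact_mxblock p q r (p_ : 'I_p -> nat) (q_ : 'I_q -> nat) (r_ : 'I_r -> nat)
    (S_ : forall i j, 'M[R]_(p_ i, q_ j)) (X_ : forall j k, 'M[V]_(q_ j, r_ k)) :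
  mxlact (mxblock S_) (mxblock X_) =
  mxblock (fun i k => \sum_j mxlact (S_ i j) (X_ j k)).
Proof.
apply/matrixP => s t; rewrite !mxE summxE; under [RHS]eq_bigr do rewrite !mxE.
rewrite sig_big_dep /= (reindex _ tagnat.sig_bij_on) /=.
by apply: eq_bigr => l _; rewrite !mxE.
Qed.

Lemma mxract_mxblock p q r (p_ : 'I_p -> nat) (q_ : 'I_q -> nat) (r_ : 'I_r -> nat)
    (X_ : forall i j, 'M[V]_(p_ i, q_ j)) (T_ : forall j k, 'M[R]_(q_ j, r_ k)) :
  mxract (mxblock X_) (mxblock T_) =
  mxblock (fun i k => \sum_j mxract (X_ i j) (T_ j k)).
Proof.
apply/matrixP => s t; rewrite !mxE summxE; under [RHS]eq_bigr do rewrite !mxE.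
rewrite sig_big_dep /= (reindex _ tagnat.sig_bij_on) /=.
by apply: eq_bigr => l _; rewrite !mxE.
Qed.

Lemma mxract_mxblock_col p q m (p_ : 'I_p -> nat) (q_ : 'I_q -> nat)
    (X_ : forall i j, 'M[V]_(p_ i, q_ j)) (T_ : forall j, 'M[R]_(q_ j, m)) :
  mxract (mxblock X_) (mxcol T_) = mxcol (fun i => \sum_j mxract (X_ i j) (T_ j)).
Proof.
apply/matrixP => s t; rewrite !mxE summxE; under [RHS]eq_bigr do rewrite !mxE.
rewrite sig_big_dep /= (reindex _ tagnat.sig_bij_on) /=.
by apply: eq_bigr => l _; rewrite !mxE.
Qed.

Lemma mxlact_mxcol p m k (p_ : 'I_p -> nat) (S_ : forall i, 'M[R]_(p_ i, m))
    (X : 'M[V]_(m, k)) :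
  mxlact (mxcol S_) X = mxcol (fun i => mxlact (S_ i) X).
Proof. by apply/matrixP => s t; rewrite !mxE; apply: eq_bigr => l _; rewrite !mxE. Qed.

End MatrixActions.

Ltac mxact_normalize :=
  repeat (rewrite -mxlact_ract || rewrite mxlactA || rewrite mxractA).

Section IndicatorSums.
Variable V : zmodType.

Lemma sum_ord_if_eq p (g : nat -> V) k :
  \sum_(m < p) (if (m : nat) == k then g m else 0) = if (k < p)%N then g k else 0.
Proof.
case: (ltnP k p) => hk.
  by rewrite -big_mkcond (big_pred1 (Ordinal hk)).
apply: big1 => m _; rewrite ifF //; apply/negbTE.
by rewrite neq_ltn (leq_trans (ltn_ord m) hk).
Qed.

End IndicatorSums.

Section Bidiagonal.
Variables (R : comPzRingType) (M : lmodType R) (n : nat).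

Definition bidiag_entry (Xs Zs : nat -> 'M[M]_n) (i j : nat) : 'M[M]_n :=
  if i == j then Xs i else if j == i.+1 then Zs i else 0.

Lemma bidiagE l (Xs Zs : nat -> 'M[M]_n) :
  bidiag l Xs Zs = mxblock (fun i j : 'I_l.+1 => bidiag_entry Xs Zs i j).
Proof. by []. Qed.

Lemma eq_bidiag l (Xs Xs' Zs : nat -> 'M[M]_n) :
  (forall i, (i <= l)%N -> Xs i = Xs' i) -> bidiag l Xs Zs = bidiag l Xs' Zs.
Proof.
move=> eqX; apply: eq_mxblock => i j.
by case: eqP => // _; rewrite eqX // -ltnS.
Qed.

End Bidiagonal.

Unset Implicit Arguments.
Section NcExtension.
Variables (R : comPzRingType) (M N : lmodType R).
Variables (Om : ncsubset M) (f : ncfun M N).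
Hypotheses (HOm : nc_set Om) (Hadm : right_admissible Om) (Hf : nc_function Om f).

Definition ncext_dom {k} (B : 'M[M]_k) := exists X (S T : 'M[R]_k),
  [/\ (0 < k)%N, mxinverse S T, Om k X & B = mxlact S (mxract X T)].

Local Notation F := (ftilde Om f).

Lemma ext_value_uniq {k} {B : 'M[M]_k} {V1 V2} :
  ext_value Om f B V1 -> ext_value Om f B V2 -> V1 = V2.
Proof.
move=> [X1 [S1 [T1 [k0 [[e1 e1'] [O1 [eB ->]]]]]]].
move=> [X2 [S2 [T2 [_ [[e2 e2'] [O2 [eB2 ->]]]]]]].
have eX2 : X2 = mxlact (T2 *m S1) (mxract X1 (T1 *m S2)).
  have <- : mxlact T2 (mxract (mxlact S2 (mxract X2 T2)) S2) = X2.
    by mxact_normalize; rewrite e2' mxlact1 mxract1.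
  by rewrite -eB2 eB; mxact_normalize.
have inv : mxinverse (T2 *m S1) (T1 *m S2).
  by split; rewrite mulmxA -[X in X *m _]mulmxA ?e1 ?e2 mulmx1.
have := (proj2 Hf) k X1 _ _ k0 inv O1; rewrite -eX2 => /(_ O2) ->.
by mxact_normalize; rewrite mulmxA e2 mul1mx -mulmxA e2 mulmx1.
Qed.

Lemma ftildeE {k} {B : 'M[M]_k} {X S T} : (0 < k)%N -> mxinverse S T -> Om k X ->
  B = mxlact S (mxract X T) -> F B = mxlact S (mxract (f k X) T).
Proof.
move=> k0 inv OX eB.
have fB : ext_value Om f B (mxlact S (mxract (f k X) T)) by exists X, S, T.
exact: ext_value_uniq (epsilon_spec _ _ (ex_intro _ _ fB)) fB.
Qed.

(* Conjugating [P 0; 0 Q] by [1 A; 0 1] leaves it fixed exactly when P A = A Q;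
   applying f to both sides of this identity gives f(P) A = A f(Q). *)
Lemma nc_function_intertwine {k m} {P : 'M[M]_k} {Q : 'M[M]_m} {A : 'M[R]_(k, m)} :
  (0 < k)%N -> (0 < m)%N -> Om k P -> Om m Q -> mxract P A = mxlact A Q ->
  mxract (f k P) A = mxlact A (f m Q).
Proof.
move=> k0 m0 OP OQ PA_AQ.
have OPQ := HOm k m P Q k0 m0 OP OQ.
have km0 : (0 < k + m)%N by rewrite addn_gt0 k0.
have inv : mxinverse (block_mx 1%:M A 0 1%:M) (block_mx 1%:M (-A) 0 1%:M).
  by split; rewrite mulmx_block !mul1mx !mulmx1 !mul0mx !mulmx0 !addr0 !add0r
    ?addNr ?addrN -scalar_mx_block.
have conjE (V : lmodType R) (P' : 'M[V]_k) (Q' : 'M[V]_m) :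
    mxlact (block_mx 1%:M A 0 1%:M) (mxract (block_mx P' 0 0 Q') (block_mx 1%:M (-A) 0 1%:M))
    = block_mx P' (mxlact A Q' - mxract P' A) 0 Q'.
  rewrite mxract_block mxlact_block !mxract1 !mxract0l !mxract0r mxractNr.
  by rewrite !mxlact1 !mxlact0l !addr0 !add0r mxlact0r addr0 addrC.
have := (proj2 Hf) (k + m)%N _ _ _ km0 inv OPQ.
rewrite conjE -PA_AQ subrr => /(_ OPQ).
rewrite (proj1 Hf k m P Q k0 m0 OP OQ) conjE.
by case/eq_block_mx => _ /eqP; rewrite eq_sym subr_eq0 => /eqP.
Qed.

Lemma ftilde_intertwine {k m} {P : 'M[M]_k} {Q : 'M[M]_m} {A : 'M[R]_(k, m)} :
  ncext_dom P -> ncext_dom Q -> mxract P A = mxlact A Q ->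
  mxract (F P) A = mxlact A (F Q).
Proof.
move=> [P0 [S1 [T1 [k0 [e1 e1'] O1 eP]]]] [Q0 [S2 [T2 [m0 [e2 e2'] O2 eQ]]]] PA_AQ.
rewrite (ftildeE k0 (conj e1 e1') O1 eP) (ftildeE m0 (conj e2 e2') O2 eQ).
pose A0 := T1 *m A *m S2.
have P0A_AQ0 : mxract P0 A0 = mxlact A0 Q0.
  have -> : P0 = mxlact T1 (mxract P S1)
    by rewrite eP; mxact_normalize; rewrite e1' mxlact1 mxract1.
  rewrite /A0; mxact_normalize.
  rewrite !mulmxA e1 mul1mx -mxractA PA_AQ eQ; mxact_normalize.
  by rewrite e2' mxract1.
have TA : T1 *m A = A0 *m T2 by rewrite /A0 -mulmxA e2 mulmx1.
mxact_normalize; rewrite TA -mxractA (nc_function_intertwine k0 m0 O1 O2 P0A_AQ0).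
by mxact_normalize; rewrite /A0 !mulmxA e1 mul1mx.
Qed.

Lemma ncext_dom_Om {k} {X : 'M[M]_k} : (0 < k)%N -> Om k X -> ncext_dom X.
Proof.
move=> k0 OX; exists X, 1%:M, 1%:M.
by split; rewrite ?mxlact1 ?mxract1 //; split; rewrite mulmx1.
Qed.

Lemma ncext_dom_cast {k k'} (e1 e2 : k = k') {B : 'M[M]_k} :
  ncext_dom B -> ncext_dom (castmx (e1, e2) B).
Proof. by case: k' / e1 e2 => e2; rewrite castmx_id. Qed.

(* Right admissibility yields an invertible r with [X r(W S); 0 X'] in Omega;
   conjugating by diag(1, r S) removes both r and S from the corner. *)
Lemma ncext_dom_block {k m} (X : 'M[M]_k) (W : 'M[M]_(k, m)) (B : 'M[M]_m) :
  (0 < k)%N -> Om k X -> ncext_dom B -> ncext_dom (block_mx X W 0 B).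
Proof.
move=> k0 OX [X' [S [T [m0 [e e'] OX' ->]]]].
have [r [r' [rr' OZ]]] := Hadm k m X X' (mxract W S) k0 m0 OX OX'.
exists (block_mx X (mxscale r (mxract W S)) 0 X'),
  (block_mx 1%:M 0 0 (r *: S)), (block_mx 1%:M 0 0 (r' *: T)).
split; [by rewrite addn_gt0 k0 | | exact: OZ |].
  by split; rewrite mulmx_block !mulmx0 !mul0mx !mul1mx !addr0 !add0r
     -scalemxAl -scalemxAr scalerA ?e ?e' ?rr' ?(mulrC r') ?rr' scale1r
     -scalar_mx_block.
rewrite mxract_block mxlact_block !mxract1 !mxract0l !mxract0r !mxlact1 !mxlact0l.
rewrite !addr0 !add0r mxlact0r mxlactZl !mxractZr mxractZl mxlactZr.
by rewrite !mxscaleA mulrC rr' !mxscale1 mxractA e mxract1.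
Qed.

Lemma bidiag_ncext_dom n l (Xs Zs : nat -> 'M[M]_n) : (0 < n)%N ->
  (forall i, Om n (Xs i)) -> ncext_dom (bidiag l Xs Zs).
Proof.
move=> n0; elim: l Xs Zs => [|l IHl] Xs Zs OXs.
  have e1 := esym (big_ord1 addn (fun=> n)).
  have := ncext_dom_cast e1 e1 (ncext_dom_Om n0 (OXs 0%N)).
  rewrite {1}(mxEmxblock (Xs 0%N)) castmx_comp castmx_id.
  by congr ncext_dom; apply: eq_mxblock => i j; rewrite !ord1.
rewrite /bidiag mxblock_recul; apply: ncext_dom_cast.
rewrite [mxcol _](_ : _ = 0); last by apply/matrixP => i j; rewrite !mxE.
rewrite [mxblock _](_ : _ = bidiag l (Xs \o succn) (Zs \o succn)); last first.
  by apply: eq_mxblock => i j /=; rewrite /bump !leq0n !add1n eqSS.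
by apply: ncext_dom_block; [| exact: OXs | exact: IHl (fun i => OXs i.+1)].
Qed.

Lemma ftilde_Om {k} {X : 'M[M]_k} : (0 < k)%N -> Om k X -> F X = f k X.
Proof.
move=> k0 OX.
have eX : X = mxlact 1%:M (mxract X 1%:M) by rewrite mxlact1 mxract1.
have inv1 : mxinverse (1%:M : 'M[R]_k) 1%:M by split; rewrite mulmx1.
by rewrite (ftildeE k0 inv1 OX eX) mxlact1 mxract1.
Qed.

Variables (n : nat) (Xs Zs : nat -> 'M[M]_n).
Hypotheses (n_gt0 : (0 < n)%N) (OXs : forall i, Om n (Xs i)).

Local Notation row0 l B :=
  (submxblock (p_ := fun _ : 'I_l.+1 => n) (q_ := fun _ : 'I_l.+1 => n) B ord0).

Lemma ftilde_bidiag_row0_sum l (X : 'M[M]_n) : Om n X ->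
  (forall i, (i < l)%N -> Xs i + Zs i = X) -> Xs l = X ->
  f n X = \sum_(j < l.+1) row0 l (F (bidiag l Xs Zs)) j.
Proof.
move=> OX rowX lastX; set C := bidiag l Xs Zs.
pose E := mxcol (p_ := fun _ : 'I_l.+1 => n) (fun _ => (1%:M : 'M[R]_n)).
have CE : mxract C E = mxlact E X.
  rewrite /C bidiagE mxract_mxblock_col mxlact_mxcol; apply: eq_mxcol => i.
  have entryE (j : 'I_l.+1) : bidiag_entry Xs Zs i j =
      (if (j : nat) == i then Xs i else 0) + (if (j : nat) == i.+1 then Zs i else 0).
    rewrite /bidiag_entry eq_sym; case: eqP => [->|_]; last by rewrite add0r.
    by rewrite (ltn_eqF (ltnSn i)) addr0.
  under eq_bigr do rewrite mxract1 entryE.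
  rewrite big_split /= (sum_ord_if_eq _ (fun=> Xs i)) (sum_ord_if_eq _ (fun=> Zs i)).
  rewrite ltn_ord mxlact1.
  case: (ltnP i l) => [ltil | leli]; first by rewrite ltnS ltil rowX.
  have eil : (i : nat) = l by apply/eqP; rewrite eqn_leq leli -ltnS ltn_ord.
  by rewrite ltnS ltnNge leli addr0 eil lastX.
have := ftilde_intertwine (bidiag_ncext_dom n l Xs Zs n_gt0 OXs) (ncext_dom_Om n_gt0 OX) CE.
rewrite (ftilde_Om n_gt0 OX) -[F C]submxblockK.
rewrite mxract_mxblock_col mxlact_mxcol => /eq_mxcolP /(_ ord0).
rewrite mxlact1 => <-; rewrite submxblockK.
by apply: eq_bigr => j _; rewrite mxract1.
Qed.

Lemma ftilde_bidiag_row0 l (j : 'I_l.+1) :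
  row0 l (F (bidiag l Xs Zs)) j = DeltaR Om f j Xs Zs.
Proof.
set C := bidiag l Xs Zs; set B := bidiag j Xs Zs.
pose E := mxblock (p_ := fun _ : 'I_l.+1 => n) (q_ := fun _ : 'I_j.+1 => n)
  (fun i k => if (i : nat) == k then (1%:M : 'M[R]_n) else 0).
have CE : mxract C E = mxlact E B.
  rewrite /C /B !bidiagE mxract_mxblock mxlact_mxblock; apply: eq_mxblock => i k.
  under eq_bigr do rewrite mxract_if.
  under [RHS]eq_bigr do rewrite mxlact_if eq_sym.
  have ltkl : (k < l.+1)%N by rewrite (leq_trans (ltn_ord k)) // -ltnS ltn_ord.
  rewrite (sum_ord_if_eq _ (bidiag_entry Xs Zs i)).
  rewrite (sum_ord_if_eq _ (bidiag_entry Xs Zs ^~ k)) ltkl.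
  case: ltnP => // ltji.
  have ltki : (k < i)%N := leq_trans (ltn_ord k) ltji.
  by rewrite /bidiag_entry (gtn_eqF ltki) (ltn_eqF (leqW ltki)).
have := ftilde_intertwine (bidiag_ncext_dom n l Xs Zs n_gt0 OXs)
  (bidiag_ncext_dom n j Xs Zs n_gt0 OXs) CE.
rewrite -[F C]submxblockK -[F B]submxblockK mxract_mxblock mxlact_mxblock.
move=> /eq_mxblockP /(_ ord0 ord_max).
under eq_bigr do rewrite mxract_if.
under [X in _ = X -> _]eq_bigr do rewrite mxlact_if eq_sym.
by rewrite -!big_mkcond (big_pred1_eq _ j) (big_pred1_eq _ ord0) !submxblockK.
Qed.

End NcExtension.

Theorem theorem4p1 (R : comPzRingType) (M N : lmodType R)
  (Om : ncsubset M) (f : ncfun M N)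
  (HOm : nc_set Om) (Hadm : right_admissible Om) (Hf : nc_function Om f)
  (n : nat) (Hn : (0 < n)%N) (Y : 'M[M]_n) (HY : Om n Y) (Nn : nat)
  (X : 'M[M]_n) (HX : Om n X) :
  f n X =
    \sum_(l < Nn.+1) DeltaR Om f l (fun _ => Y) (fun _ => X - Y)
    + DeltaR Om f Nn.+1 (fun k => if k == Nn.+1 then X else Y) (fun _ => X - Y).
Proof.
set Xs := fun k => if k == Nn.+1 then X else Y.
have OXs i : Om n (Xs i) by rewrite /Xs; case: eqP.
have rowX i : (i < Nn.+1)%N -> Xs i + (X - Y) = X.
  by rewrite /Xs => /ltn_eqF ->; rewrite addrC subrK.
have DeltaR_Y (l : 'I_Nn.+1) :
    DeltaR Om f l (fun _ => Y) (fun _ => X - Y) = DeltaR Om f l Xs (fun _ => X - Y).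
  rewrite /DeltaR (@eq_bidiag _ _ _ _ _ Xs) // => i le_il.
  by rewrite /Xs ltn_eqF // ltnS (leq_trans le_il) // -ltnS.
have row0E := ftilde_bidiag_row0 _ _ _ _ _ HOm Hadm Hf _ Xs (fun _ => X - Y) Hn OXs.
rewrite (ftilde_bidiag_row0_sum _ _ _ _ _ HOm Hadm Hf _ _ _ Hn OXs Nn.+1 _ HX rowX);
  last by rewrite /Xs eqxx.
rewrite big_ord_recr row0E; congr (_ + _).
by apply: eq_bigr => l _; rewrite DeltaR_Y row0E.
Qed.
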